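(* Let $(M,d)$ be a complete pointed metric space and $f\in\mathrm{Lip}_0(M,M)$, and assume there is $v\in\mathrm{span}(\delta(M))\cap A_{\widehat f}$. Then $A_{\widehat f}$ is dense in $\mathcal F(M)$. In particular, this holds if $\mathrm{int}(A_{\widehat f})\neq\emptyset$ or if there is $x\in M$ with $d(0,f^n(x))\to\infty$.
   Context: A pointed metric space is a metric space with a distinguished point $0$. $\mathrm{Lip}_0(M,M)$ denotes the Lipschitz maps $f:M\to M$ with $f(0)=0$; $\mathrm{Lip}_0(M)$ the real-valued Lipschitz functions vanishing at $0$ normed by the Lipschitz constant. $\delta:M\to\mathrm{Lip}_0(M)^*$, $\delta(x)(\varphi)=\varphi(x)$; $\mathcal F(M)$ is the norm-closed linear span of $\delta(M)$. $\widehat f$ is the unique bounded linear operator on $\mathcal F(M)$ with $\widehat f(\delta(x))=\delta(f(x))$. For an operator $T$, $A_T=\{\mu:\lim_n\|T^n\mu\|=\infty\}$. *)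

From HB Require Import structures.
From mathcomp Require Import all_boot all_order all_algebra.
From mathcomp Require Import all_classical all_reals all_analysis.
Set Implicit Arguments. Unset Strict Implicit. Unset Printing Implicit Defensive.
Import Order.TTheory GRing.Theory Num.Theory.
Local Open Scope classical_set_scope.
Local Open Scope ring_scope.

Section Defs.
Variables (R : realType) (M : Type).

Definition is_metric (d : M -> M -> R) : Prop :=
  [/\ (forall x y, 0 <= d x y),
      (forall x y, d x y = 0 <-> x = y),
      (forall x y, d x y = d y x) &
      (forall x y z, d x z <= d x y + d y z)].

Definition complete_metric (d : M -> M -> R) : Prop :=
  forall u : nat -> M,
    (forall e : R, 0 < e -> exists N : nat, forall m n : nat,
        (N <= m)%N -> (N <= n)%N -> d (u m) (u n) < e) ->
    exists l : M, forall e : R, 0 < e -> exists N : nat, forall n : nat,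
        (N <= n)%N -> d (u n) l < e.

Definition Lip0_self (d : M -> M -> R) (o : M) (f : M -> M) : Prop :=
  f o = o /\ exists L : R, forall x y, d (f x) (f y) <= L * d x y.

Definition Lip0 (d : M -> M -> R) (o : M) (phi : M -> R) : Prop :=
  phi o = 0 /\ exists L : R, forall x y, `|phi x - phi y| <= L * d x y.

Definition Lip0_ball (d : M -> M -> R) (o : M) (phi : M -> R) : Prop :=
  phi o = 0 /\ forall x y, `|phi x - phi y| <= d x y.

(* functionals on real functions on M; only their values on Lip_0(M) matter *)
Definition functional := (M -> R) -> R.

Definition fsub (mu nu : functional) : functional := fun phi => mu phi - nu phi.

Definition dnorm (d : M -> M -> R) (o : M) (mu : functional) : \bar R :=
  ereal_sup [set (`|mu phi|)%:E | phi in Lip0_ball d o].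

Definition in_dual (d : M -> M -> R) (o : M) (mu : functional) : Prop :=
  (forall (a : R) (phi psi : M -> R), Lip0 d o phi -> Lip0 d o psi ->
      mu (fun x => a * phi x + psi x) = a * mu phi + mu psi) /\
  exists C : R, forall phi, Lip0_ball d o phi -> `|mu phi| <= C.

Definition delta (x : M) : functional := fun phi => phi x.

Definition in_span_delta (d : M -> M -> R) (o : M) (mu : functional) : Prop :=
  exists (n : nat) (a : 'I_n -> R) (x : 'I_n -> M),
    forall phi, Lip0 d o phi -> mu phi = \sum_(i < n) a i * phi (x i).

(* mu in F(M): the norm-closure of span(delta(M)) in Lip_0(M)^* *)
Definition in_free (d : M -> M -> R) (o : M) (mu : functional) : Prop :=
  in_dual d o mu /\
  forall e : R, 0 < e -> exists nu, in_span_delta d o nu /\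
     (dnorm d o (fsub mu nu) < e%:E)%E.

(* T is a bounded linear operator on F(M) with T(delta x) = delta (f x);
   this characterizes \hat f (it is unique). *)
Definition is_hat (d : M -> M -> R) (o : M) (f : M -> M)
    (T : functional -> functional) : Prop :=
  [/\ (forall mu, in_free d o mu -> in_free d o (T mu)),
      (forall (a : R) (mu nu : functional), in_free d o mu -> in_free d o nu ->
         forall phi, Lip0 d o phi ->
           T (fun psi => a * mu psi + nu psi) phi = a * T mu phi + T nu phi),
      (exists C : R, forall mu, in_free d o mu ->
         (dnorm d o (T mu) <= C%:E * dnorm d o mu)%E) &
      (forall x phi, Lip0 d o phi -> T (delta x) phi = phi (f x))].

Definition A_set (d : M -> M -> R) (o : M) (T : functional -> functional)
    : set functional :=
  [set mu | in_free d o mu /\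
     (fun n : nat => dnorm d o (iter n T mu)) @ \oo --> +oo%E].

Definition dense_in_free (d : M -> M -> R) (o : M) (S : set functional) : Prop :=
  forall mu, in_free d o mu -> forall e : R, 0 < e ->
    exists nu, S nu /\ (dnorm d o (fsub mu nu) < e%:E)%E.

Definition nonempty_interior_in_free (d : M -> M -> R) (o : M)
    (S : set functional) : Prop :=
  exists mu0, exists r : R, 0 < r /\ S mu0 /\ forall nu, in_free d o nu ->
     (dnorm d o (fsub nu mu0) < r%:E)%E -> S nu.

End Defs.

From HB Require Import structures.
From mathcomp Require Import all_boot all_order all_algebra.
From mathcomp Require Import all_classical all_reals all_analysis.
From mathcomp Require Import ring lra zify.
Import Order.TTheory GRing.Theory Num.Theory.
Local Open Scope classical_set_scope.
Local Open Scope ring_scope.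
Set Implicit Arguments. Unset Strict Implicit. Unset Printing Implicit Defensive.

(* Given mu in F(M) and e > 0, pick w in span(delta(M)) with ||mu - w|| < e/2
   and write v = sum_k a_k delta(z_k), w = sum_k b_k delta(z_k) on common points.
   For all but finitely many t, every family G of indices with sum_G a != 0
   has sum_G (t a + b) != 0; choose such a t in (0, e / (4 sup |v|)).  Then
   nu = t v + w is e-close to mu, and nu lies in A_T by a domination estimate:
   if every family with nonzero A-mass has C-mass at least de > 0, then
   ||sum_k C_k delta(p_k)|| >= kappa |sum_k A_k phi(p_k)| for every phi in the
   unit ball of Lip_0(M), with kappa depending only on A, de and the number of
   points.  Applied to the points p = f^n o z it gives ||T^n nu|| >= kappa ||T^n v||.

   The domination estimate rests on a layer-cake pigeonhole lemma for finite
   weighted sums (section GapDecomposition): some gap (a, b) of the values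
   phi(p_k), lying on one side of 0, carries a fixed share of sum_k A_k phi(p_k),
   and phi clamped to [a, b] is a test function exhibiting the C-mass of the
   points beyond that gap.

   The two other hypotheses reduce to the first one: a subset of F(M) with
   nonempty interior meets the dense subspace span(delta(M)), and if
   d(0, f^n x) -> oo then delta(x) lies in A_T, as ||T^n delta(x)|| >= d(0, f^n x). *)

Lemma bigmax_mem d (T : orderType d) (I : finType) (P : pred I) (F : I -> T) x0 :
  \big[Order.max/x0]_(j | P j) F j \in x0 :: [seq F j | j <- enum I].
Proof.
apply: (big_ind (fun x => x \in x0 :: [seq F j | j <- enum I])).
- by rewrite inE eqxx.
- by move=> x y hx hy; case: (leP x y).
- by move=> i _; rewrite inE map_f ?orbT // mem_enum.
Qed.

Section GapDecomposition.
Variables (R : realFieldType) (m : nat) (A : 'I_m -> R).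

Definition wsum (u : 'I_m -> R) : R := \sum_k A k * u k.

Definition levels (u : 'I_m -> R) : seq R :=
  undup (0 :: [seq u k | k <- enum 'I_m]).

(* Every gap (a, b) of the values of u which lies on one side of 0 contributes
   at most B to wsum u; the contribution of a gap above 0 is the A-mass of the
   indices lying above the gap times its length, symmetrically below 0. *)
Definition gap_bounded (u : 'I_m -> R) (B : R) : Prop :=
  forall a b, a < b -> (forall k, ~~ (a < u k < b)) ->
  (0 <= a -> `|\sum_(k | b <= u k) A k| * (b - a) <= B) /\
  (b <= 0 -> `|\sum_(k | u k <= a) A k| * (b - a) <= B).

Lemma gap_bounded_opp u B : gap_bounded u B -> gap_bounded (fun k => - u k) B.
Proof.
move=> hu a b ab gap.
have gapN k : ~~ (- b < u k < - a).
  by apply/negP => /andP[h1 h2]; move/negP: (gap k); apply; apply/andP; split; lra.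
have [hpos hneg] := hu (- b) (- a) ltac:(lra) gapN.
have -> : b - a = - a - - b by ring.
split=> h0.
- rewrite (eq_bigl (fun k => u k <= - b)); first exact: hneg ltac:(lra).
  by move=> k; rewrite lerNr.
- rewrite (eq_bigl (fun k => - a <= u k)); first exact: hpos ltac:(lra).
  by move=> k; rewrite lerNl.
Qed.

Lemma wsum_opp u : wsum (fun k => - u k) = - wsum u.
Proof. by rewrite /wsum -sumrN; apply: eq_bigr => k _; rewrite mulrN. Qed.

Lemma size_levels_opp u : size (levels (fun k => - u k)) = size (levels u).
Proof.
rewrite /levels.
have -> : 0 :: [seq - u k | k <- enum 'I_m] = map -%R (0 :: [seq u k | k <- enum 'I_m]).
  by rewrite /= oppr0 -map_comp.
by rewrite undup_map_inj ?size_map //; apply: oppr_inj.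
Qed.

Lemma size_levels_gt0 u : (0 < size (levels u))%N.
Proof.
have : (0 : R) \in levels u by rewrite mem_undup inE eqxx.
by case: levels.
Qed.

(* Lowering the largest value of u, assumed positive, to the next value below
   it (or to 0) removes one level and changes wsum u by the contribution of
   one gap. *)
Section LowerTopLevel.
Variables (u : 'I_m -> R) (B : R) (k0 : 'I_m).
Hypotheses (hu : gap_bounded u B) (k0_pos : 0 < u k0).

Definition top_level : R := \big[Order.max/0]_k u k.
Definition next_level : R := \big[Order.max/0]_(k | u k < top_level) u k.
Definition lower_top (k : 'I_m) : R := if u k == top_level then next_level else u k.

Lemma le_top k : u k <= top_level. Proof. exact: le_bigmax. Qed.

Lemma next_level_ge0 : 0 <= next_level. Proof. exact: bigmax_ge_id. Qed.

Lemma next_lt_top : next_level < top_level.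
Proof. by apply: bigmax_lt => [|k]; [exact: lt_le_trans (le_top k0)|]. Qed.

Lemma le_next k : u k != top_level -> u k <= next_level.
Proof. by move=> hk; apply: le_bigmax_cond; rewrite lt_neqAle hk le_top. Qed.

Lemma gap_next_top k : ~~ (next_level < u k < top_level).
Proof.
apply/negP => /andP[h1 h2].
by have := le_next (negbT (lt_eqF h2)); lra.
Qed.

Lemma gap_bound_ge0 : 0 <= B.
Proof.
have [hpos _] := hu next_lt_top gap_next_top.
apply: le_trans (hpos next_level_ge0).
by rewrite mulr_ge0 // subr_ge0 ltW ?next_lt_top.
Qed.

Lemma size_levels_lower_top : (size (levels lower_top) < size (levels u))%N.
Proof.
have top_pos : 0 < top_level by exact: lt_le_trans (le_top k0).
have top_in : top_level \in levels u by rewrite mem_undup bigmax_mem.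
have next_in : next_level \in levels u by rewrite mem_undup bigmax_mem.
have sub : {subset levels lower_top <= rem top_level (levels u)}.
  move=> r; rewrite mem_undup (mem_rem_uniq _ (undup_uniq _)) inE.
  case/orP=> [/eqP->|/mapP[k _ ->]]; rewrite inE; apply/andP; split.
  - by rewrite lt_eqF.
  - by rewrite mem_undup inE eqxx.
  - rewrite /lower_top; case: (u k =P top_level) => [_|/eqP //].
    by rewrite lt_eqF ?next_lt_top.
  - rewrite /lower_top; case: (u k =P top_level) => // _.
    by rewrite mem_undup inE map_f ?orbT // mem_enum.
have := uniq_leq_size (undup_uniq _) sub; rewrite size_rem //.
by have := size_levels_gt0 u; case: (size (levels u)).
Qed.

Lemma gap_bounded_lower_top : gap_bounded lower_top B.
Proof.
move=> a b ab gap.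
have gap_u : (b <= next_level) || (b <= 0) -> forall k, ~~ (a < u k < b).
  move=> hb k; have := gap k; rewrite /lower_top; case: eqP => // ->.
  move=> _; apply/negP => /andP[_ h]; have := next_lt_top; have := next_level_ge0.
  by case/orP: hb => ? ? ?; lra.
split=> h0.
- case: (lerP b next_level) => hb.
  + have [hpos _] := hu ab (gap_u (introT orP (or_introl hb))).
    rewrite (eq_bigl (fun k => b <= u k)); first exact: hpos h0.
    move=> k; rewrite /lower_top; case: eqP => // ->.
    by apply/idP/idP => _; have := next_lt_top; lra.
  + rewrite big_pred0 ?normr0 ?mul0r ?gap_bound_ge0 // => k; apply/negbTE; rewrite -ltNge /lower_top.
    by case: eqP => [//|/eqP ne]; have := le_next ne; lra.
- have [_ hneg] := hu ab (gap_u (introT orP (or_intror h0))).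
  rewrite (eq_bigl (fun k => u k <= a)); first exact: hneg h0.
  move=> k; rewrite /lower_top; case: eqP => // ->.
  by apply/idP/idP => ?; have := next_lt_top; have := next_level_ge0; lra.
Qed.

Lemma wsum_lower_top : `|wsum u - wsum lower_top| <= B.
Proof.
have -> : wsum u - wsum lower_top =
    (\sum_(k | top_level <= u k) A k) * (top_level - next_level).
  rewrite /wsum -sumrB mulr_suml [RHS]big_mkcond; apply: eq_bigr => k _.
  rewrite /lower_top; case: (u k =P top_level) => [->|/eqP ne]; first by rewrite lexx; ring.
  by rewrite leNgt lt_neqAle ne le_top subrr.
have [hpos _] := hu next_lt_top gap_next_top.
by rewrite normrM (@ger0_norm _ (_ - _)) ?hpos ?next_level_ge0 // subr_ge0 ltW ?next_lt_top.
Qed.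
End LowerTopLevel.

Lemma gap_bounded_reduce u B : gap_bounded u B -> (forall k, u k = 0) \/
  exists u', (size (levels u') < size (levels u))%N /\ gap_bounded u' B /\
    `|wsum u - wsum u'| <= B.
Proof.
move=> hu.
have [[k0 pos]|npos] := pselect (exists k, 0 < u k).
  right; exists (lower_top u); split; [|split].
  - exact: size_levels_lower_top pos.
  - exact: gap_bounded_lower_top hu pos.
  - exact: wsum_lower_top hu pos.
have [[k0 neg]|nneg] := pselect (exists k, u k < 0).
  have hpos : 0 < - u k0 by rewrite oppr_gt0.
  have huN := gap_bounded_opp hu.
  right; exists (fun k => - lower_top (fun k => - u k) k); split; [|split].
  - by rewrite size_levels_opp -(size_levels_opp u) (size_levels_lower_top hpos).
  - exact/gap_bounded_opp/(gap_bounded_lower_top huN hpos).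
  - rewrite wsum_opp opprK -normrN opprD -[- wsum u]wsum_opp.
    exact: wsum_lower_top huN hpos.
left => k; apply/eqP; rewrite eq_le !real_leNgt ?num_real //.
by apply/andP; split; apply/negP => h; [apply: npos|apply: nneg]; exists k.
Qed.

Lemma wsum_le_levels B : 0 <= B -> forall N u, (size (levels u) <= N.+1)%N ->
  gap_bounded u B -> `|wsum u| <= N%:R * B.
Proof.
move=> B0; elim=> [|N IH] u hs hu; case: (gap_bounded_reduce hu) => [u0|[u' [hlt [hu' hstep]]]].
- by rewrite /wsum big1 ?normr0 ?mul0r // => k _; rewrite u0 mulr0.
- by have := size_levels_gt0 u'; lia.
- by rewrite /wsum big1 ?normr0 ?mulr_ge0 // => k _; rewrite u0 mulr0.
- have := IH u' ltac:(lia) hu'.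
  have := ler_normD (wsum u') (wsum u - wsum u'); rewrite addrC subrK.
  rewrite -addn1 natrD mulrDl mul1r; lra.
Qed.

(* Layer-cake pigeonhole: some gap of the values of u, lying on one side of 0,
   carries at least a 1/(m+1) share of wsum u. *)
Lemma exists_heavy_gap u : wsum u != 0 ->
  exists a b, [/\ a < b, (forall k, ~~ (a < u k < b)) &
    (0 <= a /\ `|wsum u| / m.+1%:R < `|\sum_(k | b <= u k) A k| * (b - a)) \/
    (b <= 0 /\ `|wsum u| / m.+1%:R < `|\sum_(k | u k <= a) A k| * (b - a))].
Proof.
move=> S0; set B := `|wsum u| / m.+1%:R.
apply: contrapT => nheavy.
have B_pos : 0 < B by rewrite divr_gt0 ?normr_gt0 // ltr0Sn.
have hu : gap_bounded u B.
  move=> a b ab gap; split=> h0; rewrite leNgt; apply/negP => hlt; apply: nheavy;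
    exists a, b; split => //; [left|right]; by split.
have hs : (size (levels u) <= m.+1)%N.
  by rewrite (leq_trans (size_undup _)) //= size_map size_enum_ord.
have := wsum_le_levels (ltW B_pos) hs hu.
suff -> : `|wsum u| = m%:R * B + B.
  by move: B_pos; clearbody B; lra.
by rewrite /B; field; rewrite addrC natr1 pnatr_eq0.
Qed.
End GapDecomposition.

Lemma finite_pos_lower_bound (R : realDomainType) (I : finType) (P : pred I) (F : I -> R) :
  (forall i, P i -> 0 < F i) -> exists2 de, 0 < de & forall i, P i -> de <= F i.
Proof.
move=> Fpos; exists (\big[Order.min/1]_(i | P i) F i); first exact: lt_bigmin.
by move=> i Pi; apply: bigmin_le_cond.
Qed.

(* Finitely many nonconstant affine maps t |-> t a_i + b_i have finitely many
   zeros, so some t in (0, e) avoids all of them. *)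
Lemma avoid_affine_zeros (R : realFieldType) (I : finType) (a b : I -> R) (e : R) :
  0 < e -> exists t, [/\ 0 < t, t < e & forall i, a i != 0 -> t * a i + b i != 0].
Proof.
move=> e0; pose zero_at i := - b i / a i.
have [de de0 de_le] : exists2 de, 0 < de &
    forall i, (a i != 0) && (zero_at i != 0) -> de <= `|zero_at i|.
  by apply: finite_pos_lower_bound => i /andP[_]; rewrite normr_gt0.
have min_le_de : Order.min de e <= de by rewrite ge_min lexx.
have min_le_e : Order.min de e <= e by rewrite ge_min lexx orbT.
have min_pos : 0 < Order.min de e by rewrite lt_min de0.
set t := Order.min de e / 2.
have t_pos : 0 < t by rewrite /t; lra.
have t_lt_de : t < de by rewrite /t; lra.
exists t; split => [//||i ai]; first by rewrite /t; lra.
apply/eqP => h.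
have zero_i : zero_at i = t.
  by rewrite /zero_at -[b i](addKr (t * a i)) h addr0 opprK mulfK.
have := de_le i; rewrite ai zero_i (gt_eqF t_pos) (ger0_norm (ltW t_pos)).
by move=> /(_ isT) /(lt_le_trans t_lt_de); rewrite ltxx.
Qed.

Section FreeSpace.
Variables (R : realType) (M : Type) (d : M -> M -> R) (o : M).
Hypothesis hd : is_metric d.

Lemma dist_ge0 x y : 0 <= d x y. Proof. by case: hd. Qed.
Lemma dist_xx x : d x x = 0. Proof. by case: hd => _ h _ _; apply/h. Qed.
Lemma distC x y : d x y = d y x. Proof. by case: hd. Qed.
Lemma dist_triangle x y z : d x z <= d x y + d y z. Proof. by case: hd. Qed.

Lemma ball_Lip0 phi : Lip0_ball d o phi -> Lip0 d o phi.
Proof. by move=> [h0 h]; split => //; exists 1 => x y; rewrite mul1r. Qed.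

Lemma Lip0_ball0 : Lip0_ball d o (fun _ => 0).
Proof. by split => // x y; rewrite subrr normr0 dist_ge0. Qed.

Lemma ball_bound phi x : Lip0_ball d o phi -> `|phi x| <= d x o.
Proof. by move=> [h0 h]; have := h x o; rewrite h0 subr0. Qed.

Lemma dist_to_base_ball : Lip0_ball d o (d ^~ o).
Proof.
split=> [|x y]; first exact: dist_xx.
rewrite ler_norml; have := dist_triangle x y o; have := dist_triangle y x o.
by rewrite (distC y x) => ? ?; apply/andP; split; lra.
Qed.

Lemma Lip0_lin a phi psi : Lip0 d o phi -> Lip0 d o psi ->
  Lip0 d o (fun x => a * phi x + psi x).
Proof.
move=> [p0 [L1 h1]] [q0 [L2 h2]]; split; first by rewrite p0 q0 mulr0 addr0.
exists (`|a| * L1 + L2) => x y.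
have -> : a * phi x + psi x - (a * phi y + psi y) =
  a * (phi x - phi y) + (psi x - psi y) by ring.
apply: (le_trans (ler_normD _ _)); rewrite normrM mulrDl -mulrA.
by apply: lerD => //; apply: ler_wpM2l.
Qed.

Definition ball_eq (mu nu : functional R M) : Prop :=
  forall phi, Lip0_ball d o phi -> mu phi = nu phi.

Lemma dnorm_ball_eq mu nu : ball_eq mu nu -> dnorm d o mu = dnorm d o nu.
Proof.
move=> h; rewrite /dnorm; congr ereal_sup; apply/seteqP; split => _ [phi hp <-];
  by exists phi => //; rewrite h.
Qed.

Lemma dnorm_ge mu phi : Lip0_ball d o phi -> ((`|mu phi|)%:E <= dnorm d o mu)%E.
Proof. by move=> hp; apply: ereal_sup_ubound; exists phi. Qed.

Lemma dnorm_le mu (r : R) : (forall phi, Lip0_ball d o phi -> `|mu phi| <= r) ->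
  (dnorm d o mu <= r%:E)%E.
Proof. by move=> h; apply: ge_ereal_sup => _ [phi hp <-]; rewrite lee_fin h. Qed.

Lemma dnorm_ge0 mu : (0 <= dnorm d o mu)%E.
Proof. exact: le_trans (dnorm_ge mu Lip0_ball0). Qed.

Lemma dnorm_lt mu (r : R) phi : (dnorm d o mu < r%:E)%E -> Lip0_ball d o phi ->
  `|mu phi| < r.
Proof. by move=> h hp; rewrite -lte_fin (le_lt_trans (dnorm_ge _ hp)). Qed.

Lemma dnorm_fsubC mu nu : dnorm d o (fsub mu nu) = dnorm d o (fsub nu mu).
Proof.
rewrite /dnorm; congr ereal_sup; apply/seteqP; split => _ [phi hp <-];
  by exists phi => //; rewrite /fsub distrC.
Qed.

Lemma dnorm_delta_ge x : ((d o x)%:E <= dnorm d o (delta x))%E.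
Proof.
by apply: le_trans (dnorm_ge _ dist_to_base_ball); rewrite lee_fin distC ler_norm.
Qed.

Definition mol n (c : 'I_n -> R) (x : 'I_n -> M) : functional R M :=
  fun phi => \sum_i c i * phi (x i).

Lemma span_mol n (c : 'I_n -> R) x : in_span_delta d o (mol c x).
Proof. by exists n, c, x. Qed.

Lemma span_delta x : in_span_delta d o (delta x).
Proof. by exists 1%N, (fun _ => 1), (fun _ => x) => phi _; rewrite big_ord1 mul1r. Qed.

Lemma span_free mu : in_span_delta d o mu -> in_free d o mu.
Proof.
move=> [n [c [x h]]]; split; last first.
  move=> e e0; exists mu; split; first by exists n, c, x.
  apply: le_lt_trans (dnorm_le (r := 0) _) _; last by rewrite lte_fin.
  by move=> phi _; rewrite /fsub subrr normr0.
split.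
  move=> a phi psi hp hq; rewrite !h //; last exact: Lip0_lin.
  by rewrite big_distrr -big_split /=; apply: eq_bigr => i _; ring.
exists (\sum_(i < n) `|c i| * d (x i) o) => phi hp.
rewrite h; last exact: ball_Lip0.
apply: le_trans (ler_norm_sum _ _ _) _.
by apply: ler_sum => i _; rewrite normrM ler_wpM2l ?ball_bound.
Qed.

Lemma mol_lin n a (c c' : 'I_n -> R) x phi :
  a * mol c x phi + mol c' x phi = mol (fun k => a * c k + c' k) x phi.
Proof. by rewrite /mol big_distrr -big_split /=; apply: eq_bigr => i _; ring. Qed.

Section Concatenation.
Variables (n1 n2 : nat) (x1 : 'I_n1 -> M) (x2 : 'I_n2 -> M).

Definition catp (k : 'I_(n1 + n2)) : M :=
  match fintype.split k with inl i => x1 i | inr j => x2 j end.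
Definition padl (c : 'I_n1 -> R) (k : 'I_(n1 + n2)) : R :=
  match fintype.split k with inl i => c i | inr _ => 0 end.
Definition padr (c : 'I_n2 -> R) (k : 'I_(n1 + n2)) : R :=
  match fintype.split k with inl _ => 0 | inr j => c j end.

Lemma mol_padl c phi : mol (padl c) catp phi = mol c x1 phi.
Proof.
rewrite /mol big_split_ord /= [X in _ + X]big1 ?addr0 => [|j _].
  by apply: eq_bigr => i _; rewrite /padl /catp (unsplitK (inl _)).
by rewrite /padl /catp (unsplitK (inr _)) mul0r.
Qed.

Lemma mol_padr c phi : mol (padr c) catp phi = mol c x2 phi.
Proof.
rewrite /mol big_split_ord /= big1 ?add0r => [|i _].
  by apply: eq_bigr => j _; rewrite /padr /catp (unsplitK (inr _)).
by rewrite /padr /catp (unsplitK (inl _)) mul0r.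
Qed.
End Concatenation.

Lemma span_common_support mu nu : in_span_delta d o mu -> in_span_delta d o nu ->
  exists n (a b : 'I_n -> R) (x : 'I_n -> M),
    forall phi, Lip0 d o phi -> mu phi = mol a x phi /\ nu phi = mol b x phi.
Proof.
move=> [n1 [c1 [x1 h1]]] [n2 [c2 [x2 h2]]].
exists (n1 + n2)%N, (@padl n1 n2 c1), (@padr n1 n2 c2), (catp x1 x2) => phi hp.
by rewrite mol_padl mol_padr h1 ?h2.
Qed.

Lemma span_lin a mu nu : in_span_delta d o mu -> in_span_delta d o nu ->
  in_span_delta d o (fun psi => a * mu psi + nu psi).
Proof.
move=> hmu hnu; have [n [c [c' [x h]]]] := span_common_support hmu hnu.
exists n, (fun k => a * c k + c' k), x => phi hp.
by have [-> ->] := h phi hp; rewrite mol_lin.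
Qed.

Lemma free_lin a mu nu : in_free d o mu -> in_free d o nu ->
  in_free d o (fun psi => a * mu psi + nu psi).
Proof.
move=> [[l1 [C1 b1]] ap1] [[l2 [C2 b2]] ap2]; split; first split.
- by move=> b phi psi hp hq; rewrite l1 // l2 //; ring.
- exists (`|a| * C1 + C2) => phi hp.
  apply: le_trans (ler_normD _ _) _; rewrite normrM.
  by apply: lerD; [apply: ler_wpM2l|]; auto.
move=> e e0; set e1 := e / (`|a| + 2).
have e10 : 0 < e1 by rewrite divr_gt0 // ltr_wpDl.
have [mu' [s1 h1]] := ap1 e1 e10.
have [nu' [s2 h2]] := ap2 e1 e10.
exists (fun psi => a * mu' psi + nu' psi); split; first exact: span_lin.
apply: le_lt_trans (dnorm_le (r := (`|a| + 1) * e1) _) _.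
  move=> phi hp; rewrite /fsub.
  have -> : a * mu phi + nu phi - (a * mu' phi + nu' phi) =
    a * fsub mu mu' phi + fsub nu nu' phi by rewrite /fsub; ring.
  apply: le_trans (ler_normD _ _) _; rewrite normrM mulrDl mul1r.
  apply: lerD; last exact/ltW/(dnorm_lt h2).
  by apply: ler_wpM2l => //; exact/ltW/(dnorm_lt h1).
rewrite lte_fin /e1 mulrA ltr_pdivrMr ?ltr_wpDl //.
by rewrite mulrC ltr_pM2l //; lra.
Qed.

Definition clamp (a b s : R) : R := Order.min b (Order.max a s).

Lemma clamp_lip a b x y : `|clamp a b x - clamp a b y| <= `|x - y|.
Proof.
have h1 := ler_norm (x - y); have h2 := ler_norm (y - x); rewrite distrC in h2.
rewrite /clamp ler_norml !maxEle; case: ifPn => ?; case: ifPn => ?; rewrite !minEle;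
  repeat case: ifPn => ?; apply/andP; split; lra.
Qed.

Lemma clamp_gap a b x : a < b -> ~~ (a < x < b) -> clamp a b x = if b <= x then b else a.
Proof.
move=> ab gap; have side : x <= a \/ b <= x.
  by case: (lerP x a) => [|ax]; [left|right; move: gap; rewrite ax /= -leNgt].
by rewrite /clamp maxEle; case: ifPn => ?; rewrite minEle;
  repeat case: ifPn => ?; case: side => ?; lra.
Qed.

Lemma clamp_ball a b phi : Lip0_ball d o phi ->
  Lip0_ball d o (fun z => clamp a b (phi z) - clamp a b 0).
Proof.
move=> [phi0 hphi]; split=> [|x y]; first by rewrite phi0 subrr.
have -> : forall s t c : R, s - c - (t - c) = s - t by move=> s t c; ring.
exact: le_trans (clamp_lip _ _ _ _) (hphi x y).
Qed.

Section GapWitness.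
(* A gap (a, b) in the values of phi at the points p yields a clamped test
   function on which the molecule sum_k C_k delta(p_k) is large. *)
Variables (n : nat) (C : 'I_n -> R) (p : 'I_n -> M) (phi : M -> R) (a b : R).
Hypotheses (hphi : Lip0_ball d o phi) (ab : a < b)
  (gap : forall k, ~~ (a < phi (p k) < b)).

Lemma mol_clamp : mol C p (fun z => clamp a b (phi z) - clamp a b 0) =
  \sum_k C k * (if b <= phi (p k) then b - clamp a b 0 else a - clamp a b 0).
Proof. by apply: eq_bigr => k _; rewrite clamp_gap //; case: ifP. Qed.

Lemma dnorm_mol_upper_gap : 0 <= a ->
  ((`|\sum_(k | b <= phi (p k)) C k| * (b - a))%:E <= dnorm d o (mol C p))%E.
Proof.
move=> a0; apply: le_trans (dnorm_ge _ (clamp_ball a b hphi)).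
rewrite lee_fin mol_clamp.
have -> : clamp a b 0 = a by rewrite /clamp (max_idPl a0) (min_idPr (ltW ab)).
have -> : \sum_k C k * (if b <= phi (p k) then b - a else a - a) =
    (\sum_(k | b <= phi (p k)) C k) * (b - a).
  rewrite mulr_suml [RHS]big_mkcond; apply: eq_bigr => k _.
  by case: ifP; rewrite ?subrr ?mulr0 ?mul0r.
by rewrite normrM (@ger0_norm _ (b - a)) // subr_ge0 ltW.
Qed.

Lemma dnorm_mol_lower_gap : b <= 0 ->
  ((`|\sum_(k | phi (p k) <= a) C k| * (b - a))%:E <= dnorm d o (mol C p))%E.
Proof.
move=> b0; apply: le_trans (dnorm_ge _ (clamp_ball a b hphi)).
rewrite lee_fin mol_clamp.
have -> : clamp a b 0 = b.
  by rewrite /clamp (max_idPr (ltW (lt_le_trans ab b0))) (min_idPl b0).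
have lower k : (phi (p k) <= a) = ~~ (b <= phi (p k)).
  rewrite -ltNge; apply/idP/idP => h; first exact: le_lt_trans h ab.
  by move: (gap k); rewrite h andbT -leNgt.
have -> : \sum_k C k * (if b <= phi (p k) then b - b else a - b) =
    - ((\sum_(k | phi (p k) <= a) C k) * (b - a)).
  rewrite mulr_suml -sumrN [RHS]big_mkcond; apply: eq_bigr => k _; rewrite lower.
  by case: ifP => _ /=; rewrite ?subrr ?mulr0 ?oppr0 //; ring.
by rewrite normrN normrM (@ger0_norm _ (b - a)) // subr_ge0 ltW.
Qed.
End GapWitness.

Lemma heavy_level_set m (A C : 'I_m -> R) (p : 'I_m -> M) phi :
  Lip0_ball d o phi -> mol A p phi != 0 ->
  exists (G : {set 'I_m}) (L : R),
    `|mol A p phi| / m.+1%:R < `|\sum_(k in G) A k| * L /\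
    ((`|\sum_(k in G) C k| * L)%:E <= dnorm d o (mol C p))%E.
Proof.
move=> hphi S0; have [a [b [ab gap [[a0 h]|[b0 h]]]]] := exists_heavy_gap S0.
- exists [set k | b <= phi (p k)]%SET, (b - a).
  split; [under eq_bigl => k do rewrite inE; exact: h|].
  under eq_bigl => k do rewrite inE; exact: dnorm_mol_upper_gap.
- exists [set k | phi (p k) <= a]%SET, (b - a).
  split; [under eq_bigl => k do rewrite inE; exact: h|].
  under eq_bigl => k do rewrite inE; exact: dnorm_mol_lower_gap.
Qed.

Lemma dnorm_mol_dominates m (A C : 'I_m -> R) (p : 'I_m -> M) (de : R) : 0 < de ->
  (forall G : {set 'I_m}, \sum_(k in G) A k != 0 -> de <= `|\sum_(k in G) C k|) ->
  forall phi, Lip0_ball d o phi ->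
  ((`|mol A p phi| * (de / (m.+1%:R * (\sum_k `|A k| + 1))))%:E
     <= dnorm d o (mol C p))%E.
Proof.
move=> de0 hde phi hphi.
have [->|S0] := eqVneq (mol A p phi) 0; first by rewrite normr0 mul0r dnorm_ge0.
have [G [L [heavy witness]]] := heavy_level_set C hphi S0.
set X := `|mol A p phi| / m.+1%:R in heavy *.
have X0 : 0 <= X by rewrite divr_ge0.
set SA := \sum_k `|A k|.
have SA1 : 0 < SA + 1 by rewrite ltr_pwDr // sumr_ge0.
have massA_le : `|\sum_(k in G) A k| <= SA.
  apply: le_trans (ler_norm_sum _ _ _) _.
  by rewrite /SA [leRHS](bigID (mem G)) /= lerDl sumr_ge0.
have massA_neq0 : \sum_(k in G) A k != 0.
  by apply: contraTneq heavy => ->; rewrite normr0 mul0r -leNgt.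
have L0 : 0 <= L.
  rewrite leNgt; apply: contraTN heavy => L0.
  by rewrite -leNgt (le_trans _ X0) // mulr_ge0_le0 // ltW.
have XL : X / (SA + 1) <= L.
  rewrite ler_pdivrMr //; apply/ltW/(lt_le_trans heavy).
  by rewrite mulrC ler_wpM2l // (le_trans massA_le) // lerDl.
apply: le_trans witness; rewrite lee_fin.
have -> : `|mol A p phi| * (de / (m.+1%:R * (SA + 1))) = X / (SA + 1) * de.
  by rewrite /X invfM; ring.
apply: le_trans (ler_wpM2r (ltW de0) XL) _.
by rewrite mulrC ler_wpM2r // hde.
Qed.

Lemma free0 : in_free d o (fun _ => 0).
Proof.
by apply: span_free; exists 0%N, (fun _ => 0), (fun _ => o) => phi _; rewrite big_ord0.
Qed.

Section Operator.
Variables (f : M -> M) (T : functional R M -> functional R M).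
Hypothesis hT : is_hat d o f T.

Lemma T_free mu : in_free d o mu -> in_free d o (T mu).
Proof. by case: hT => h _ _ _; apply: h. Qed.

Lemma T_lin a mu nu phi : in_free d o mu -> in_free d o nu -> Lip0 d o phi ->
  T (fun psi => a * mu psi + nu psi) phi = a * T mu phi + T nu phi.
Proof. by move=> fmu fnu hphi; case: hT => _ h _ _; apply: h. Qed.

Lemma T_delta x phi : Lip0 d o phi -> T (delta x) phi = phi (f x).
Proof. by case: hT => _ _ _ h; apply: h. Qed.

(* Being bounded and linear, T respects agreement on the unit ball. *)
Lemma T_ball_eq mu nu : in_free d o mu -> in_free d o nu ->
  ball_eq mu nu -> ball_eq (T mu) (T nu).
Proof.
move=> fmu fnu e phi hphi.
pose w := fun psi => (-1) * mu psi + nu psi.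
have w_free : in_free d o w by apply: free_lin.
have w_norm0 : dnorm d o w = 0%E.
  apply/eqP; rewrite eq_le dnorm_ge0 andbT.
  by apply: dnorm_le => psi hpsi; rewrite /w e // mulN1r addNr normr0.
have [C hC] : exists C : R, forall mu, in_free d o mu ->
  (dnorm d o (T mu) <= C%:E * dnorm d o mu)%E by case: hT.
have := le_trans (dnorm_ge (T w) hphi) (hC w w_free).
rewrite w_norm0 mule0 lee_fin normr_le0 /w T_lin //; last exact: ball_Lip0.
by rewrite mulN1r addrC subr_eq0 => /eqP ->.
Qed.

Lemma T_zero phi : Lip0 d o phi -> T (fun _ => 0) phi = 0.
Proof.
move=> hphi; have := T_lin 1 free0 free0 hphi.
have -> : (fun psi : M -> R => 1 * (fun _ => 0) psi + (fun _ => 0) psi) =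
  (fun _ => 0 : R) by apply: funext => psi; rewrite mul1r addr0.
by rewrite mul1r => h; apply: (addrI (T (fun _ => 0) phi)); rewrite addr0 -h.
Qed.

Lemma iter_free n mu : in_free d o mu -> in_free d o (iter n T mu).
Proof. by move=> fmu; elim: n => //= n IH; apply: T_free. Qed.

Lemma iter_ball_eq n mu nu : in_free d o mu -> in_free d o nu -> ball_eq mu nu ->
  ball_eq (iter n T mu) (iter n T nu).
Proof.
move=> fmu fnu e; elim: n => //= n IH.
by apply: T_ball_eq => //; apply: iter_free.
Qed.

Lemma T_mol n (c : 'I_n -> R) x : ball_eq (T (mol c x)) (mol c (f \o x)).
Proof.
elim: n c x => [|n IH] c x phi hphi.
  have -> : mol c x = (fun _ => 0) by apply: funext => psi; rewrite /mol big_ord0.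
  rewrite T_zero; last exact: ball_Lip0.
  by rewrite /mol big_ord0.
pose c' := fun i : 'I_n => c (widen_ord (leqnSn n) i).
pose x' := fun i : 'I_n => x (widen_ord (leqnSn n) i).
have -> : mol c x = fun psi => c ord_max * delta (x ord_max) psi + mol c' x' psi.
  by apply: funext => psi; rewrite /mol big_ord_recr /= addrC.
have hL := ball_Lip0 hphi.
have free_delta := span_free (span_delta (x ord_max)).
have free_mol := span_free (span_mol c' x').
rewrite T_lin //.
by rewrite T_delta // (IH c' x' phi hphi) /mol big_ord_recr /= addrC.
Qed.

Lemma iter_mol n k (c : 'I_k -> R) x :
  ball_eq (iter n T (mol c x)) (mol c (fun i => iter n f (x i))).
Proof.
elim: n => [|n IH] phi hphi //=.
rewrite (T_ball_eq (iter_free n (span_free (span_mol c x))) (span_free (span_mol _ _)) IH) //.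
exact: T_mol.
Qed.

(* Key step: if v = sum_k a_k delta(z_k) lies in A_T and w = sum_k b_k delta(z_k),
   then t v + w lies in A_T as soon as t avoids the finitely many values making
   some nonzero subfamily sum of t a + b vanish: by the domination estimate,
   ||T^n (t v + w)|| >= kappa ||T^n v|| for a constant kappa > 0. *)
Lemma A_set_perturb m (a b : 'I_m -> R) (z : 'I_m -> M) (t : R) v w :
  A_set d o T v -> in_span_delta d o w ->
  (forall phi, Lip0 d o phi -> v phi = mol a z phi /\ w phi = mol b z phi) ->
  (forall G : {set 'I_m}, \sum_(k in G) a k != 0 ->
     t * (\sum_(k in G) a k) + \sum_(k in G) b k != 0) ->
  A_set d o T (fun psi => t * v psi + w psi).
Proof.
move=> [v_free v_div] w_span hvw ht.
pose c k := t * a k + b k.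
have mol_free (c' : 'I_m -> R) : in_free d o (mol c' z) by exact/span_free/span_mol.
have nu_free := free_lin t v_free (span_free w_span).
have iter_v n : dnorm d o (iter n T v) = dnorm d o (mol a (fun i => iter n f (z i))).
  apply: dnorm_ball_eq => phi hphi.
  rewrite (iter_ball_eq n v_free (mol_free a) _ hphi) ?(iter_mol n a z hphi) //.
  by move=> psi hpsi; have [-> _] := hvw psi (ball_Lip0 hpsi).
have iter_nu n : dnorm d o (iter n T (fun psi => t * v psi + w psi)) =
    dnorm d o (mol c (fun i => iter n f (z i))).
  apply: dnorm_ball_eq => phi hphi.
  rewrite (iter_ball_eq n nu_free (mol_free c) _ hphi) ?(iter_mol n c z hphi) //.
  by move=> psi hpsi; have [-> ->] := hvw psi (ball_Lip0 hpsi); rewrite mol_lin.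
have sum_c G : \sum_(k in G) c k = t * (\sum_(k in G) a k) + \sum_(k in G) b k.
  by rewrite big_split mulr_sumr.
have [de de0 hde] : exists2 de, 0 < de & forall G : {set 'I_m},
    \sum_(k in G) a k != 0 -> de <= `|\sum_(k in G) c k|.
  by apply: finite_pos_lower_bound => G hG; rewrite normr_gt0 sum_c ht.
set kappa := de / (m.+1%:R * (\sum_k `|a k| + 1)).
have kappa0 : 0 < kappa by rewrite divr_gt0 // mulr_gt0 // ltr_wpDl // sumr_ge0.
split=> //; apply/cvgeyPge => r.
apply: filterS (cvgey_gt v_div (r / kappa)) => n hn.
rewrite iter_nu; rewrite iter_v in hn.
have [_ [phi hphi <-] hlt] := ereal_sup_gt hn.
apply: le_trans _ (dnorm_mol_dominates (fun i => iter n f (z i)) de0 hde hphi).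
rewrite lee_fin.
by move: hlt; rewrite lte_fin ltr_pdivrMr // => /ltW.
Qed.

(* One element of span(delta(M)) in A_T makes A_T dense in F(M):
   Approximate mu by w in the span within e/2 and perturb w by t v, t small. *)
Lemma A_set_dense_of_span v : in_span_delta d o v -> A_set d o T v ->
  dense_in_free d o (A_set d o T).
Proof.
move=> v_span vA mu [_ mu_approx] e e0.
have [w [w_span w_close]] := mu_approx (e / 2) ltac:(lra).
have [m [a [b [z hvw]]]] := span_common_support v_span w_span.
have [Cv Cv0 v_bound] : exists2 C : R, 0 < C &
    forall phi, Lip0_ball d o phi -> `|v phi| <= C.
  have [[_ [C hC]] _] := vA.1; exists (`|C| + 1) => [|phi /hC]; first by rewrite ltr_wpDl.
  by move=> h; apply: le_trans h _; rewrite (le_trans (ler_norm C)) ?lerDl.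
have e4 : 0 < e / (4 * Cv) by rewrite divr_gt0 // mulr_gt0.
have [t [t0 te ht]] := avoid_affine_zeros (fun G : {set 'I_m} => \sum_(k in G) a k)
  (fun G => \sum_(k in G) b k) e4.
exists (fun psi => t * v psi + w psi); split; first exact: (A_set_perturb vA w_span hvw ht).
apply: le_lt_trans (dnorm_le (r := e / 2 + e / 4) _) _; last by rewrite lte_fin; lra.
move=> phi hphi; rewrite /fsub.
have -> : mu phi - (t * v phi + w phi) = (mu phi - w phi) - t * v phi by ring.
apply: le_trans (ler_normB _ _) _; rewrite normrM (gtr0_norm t0).
apply: lerD; first exact/ltW/(dnorm_lt w_close).
have : t * (4 * Cv) <= e by rewrite -ler_pdivlMr ?mulr_gt0 // ltW.
by have := ler_wpM2l (ltW t0) (v_bound phi hphi); nra.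
Qed.

Lemma iter_delta n x : ball_eq (iter n T (delta x)) (delta (iter n f x)).
Proof.
elim: n => [|n IH] phi hphi //=.
rewrite (T_ball_eq (iter_free n (span_free (span_delta x))) (span_free (span_delta _)) IH hphi).
exact: T_delta (ball_Lip0 hphi).
Qed.

(* An orbit escaping to infinity gives a point evaluation in A_T, because
   ||T^n delta(x)|| = ||delta(f^n x)|| >= d(0, f^n x). *)
Lemma delta_A_set x : (fun n => d o (iter n f x)) @ \oo --> +oo ->
  A_set d o T (delta x).
Proof.
move=> escape; split; first exact: span_free (span_delta x).
apply/cvgeyPge => r; apply: filterS (cvgry_ge escape r) => n hn.
rewrite (dnorm_ball_eq (iter_delta n x)).
by apply: le_trans (dnorm_delta_ge _); rewrite lee_fin.
Qed.
End Operator.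

Lemma span_meets_interior S : (forall mu, S mu -> in_free d o mu) ->
  nonempty_interior_in_free d o S -> exists v, in_span_delta d o v /\ S v.
Proof.
move=> S_free [mu0 [r [r0 [/S_free [_ approx] ball_S]]]].
have [v [v_span close]] := approx r r0.
by exists v; split; last by apply: ball_S; [exact: span_free|rewrite dnorm_fsubC].
Qed.
End FreeSpace.

Theorem theorem5p4 (R : realType) (M : Type) (d : M -> M -> R) (o : M)
    (f : M -> M) (T : functional R M -> functional R M) :
  is_metric d -> complete_metric d -> Lip0_self d o f -> is_hat d o f T ->
  ((exists v, in_span_delta d o v /\ A_set d o T v) \/
   nonempty_interior_in_free d o (A_set d o T) \/
   (exists x : M, (fun n : nat => d o (iter n f x)) @ \oo --> +oo)) ->
  dense_in_free d o (A_set d o T).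
Proof.
move=> hd _ _ hT hyp.
have [v [v_span vA]] : exists v, in_span_delta d o v /\ A_set d o T v.
  case: hyp => [//|[|[x escape]]].
    exact: (@span_meets_interior _ _ _ _ (A_set d o T) (fun mu muA => muA.1)).
  exists (delta x); split; first exact: span_delta.
  exact: (delta_A_set hd hT escape).
exact: (A_set_dense_of_span hd hT v_span vA).
Qed.
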